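(* Let $0\le p_1<1/2<p_2\le 1$ and $c=\min\{1/2-p_1,\,p_2-1/2\}$. Let $\ell\ge 7$ be an integer with $\ell\ge (1/c^2)\ln(\ell+1)$. Then $|\mathbf{G}(\ell+1,[p_1\ell,p_2\ell])|\le 2^{\ell-3}$, and moreover there exists an injective map $\Psi:\mathbf{G}(\ell+1,[p_1\ell,p_2\ell])\to \mathcal{W}(\ell-2,\ell-2,[p_1(\ell-2),p_2(\ell-2)])$.
   Context: $\mathrm{wt}(\mathbf{x})$ denotes the number of ones of a binary sequence $\mathbf{x}$. $\mathbf{G}(\ell+1,[p_1\ell,p_2\ell])$ is the set of all $\mathbf{x}=x_1\dots x_{\ell+1}\in\{0,1\}^{\ell+1}$ such that at least one of the two windows $x_1\dots x_\ell$, $x_2\dots x_{\ell+1}$ has weight outside $[p_1\ell,p_2\ell]$. For reals $a\le b$ and $L\le n$, $\mathcal{W}(n,L,[a,b])$ is the set of $\mathbf{x}\in\{0,1\}^n$ all of whose length-$L$ windows $x_i\dots x_{i+L-1}$ have weight in $[a,b]$; thus $\mathcal{W}(\ell-2,\ell-2,[p_1(\ell-2),p_2(\ell-2)])$ is the set of sequences in $\{0,1\}^{\ell-2}$ with weight in $[p_1(\ell-2),p_2(\ell-2)]$. $\ln$ is the natural logarithm. *)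

From mathcomp Require Import all_boot all_order all_algebra.
From mathcomp Require Import all_classical all_reals all_analysis.
Set Implicit Arguments. Unset Strict Implicit. Unset Printing Implicit Defensive.
Import Order.TTheory GRing.Theory Num.Theory.
Local Open Scope ring_scope.

Definition wt (x : seq bool) : nat := count id x.

(* window x i L : the length-L window x_{i+1} ... x_{i+L} (0-based start i) *)
Definition window (x : seq bool) (i L : nat) : seq bool := take L (drop i x).

Definition wt_in {R : realType} (a b : R) (s : seq bool) : bool :=
  (a <= (wt s)%:R) && ((wt s)%:R <= b).

Definition Gset {R : realType} (ell : nat) (p1 p2 : R) : {set (ell.+1).-tuple bool} :=
  [set x : (ell.+1).-tuple bool |
     ~~ wt_in (p1 * ell%:R) (p2 * ell%:R) (window x 0 ell)
  || ~~ wt_in (p1 * ell%:R) (p2 * ell%:R) (window x 1 ell)].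

Definition Wset {R : realType} (n L : nat) (a b : R) : {set n.-tuple bool} :=
  [set x : n.-tuple bool | [forall i : 'I_n.+1, (i + L <= n)%N ==> wt_in a b (window x i L)]].

From mathcomp Require Import all_boot all_order all_algebra.
From mathcomp Require Import all_classical all_reals all_analysis.
From mathcomp Require Import ring lra zify.
Import Order.TTheory GRing.Theory Num.Theory.
Local Open Scope ring_scope.

(* Proof by a sixth-moment (Markov) tail bound on the weight of a random word.

   For a binary word s let imbalance s = 2 wt(s) - |s|.  Appending one bit shifts the
   imbalance by +-1, which yields a recurrence for the even moments over all n-bit
   words; in particular  sum_s imbalance(s)^6 = (15n^3 - 30n^2 + 16n) 2^n <= 15 n^3 2^n.
   A word whose weight lies outside [p1 n, p2 n] has |imbalance| >= 2cn, so by Markov's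
   inequality at most 15 n^3 2^n / (2cn)^6 = 15 2^n / (64 (c^2 n)^3) words are bad.

   Since e^2 <= 8 <= l + 1, the hypothesis gives c^2 l >= 2.  A word of G has a bad
   window of length l, obtained by dropping its last or its first bit, both 2-to-1 maps,
   so |G| <= 60 2^l / 512 <= 2^(l-3).  With n = l - 2 we have c^2 n >= 3/2, so at most
   half of the n-bit words are bad and |W| >= 2^(n-1) = 2^(l-3).  Hence |G| <= |W| and
   the injection Psi : G -> W exists. *)

Lemma card_le_sum (R : numDomainType) (T : finType) (A : {set T}) (f : T -> R) (t : R) :
  (forall x, 0 <= f x) -> (forall x, x \in A -> t <= f x) ->
  #|A|%:R * t <= \sum_x f x.
Proof.
move=> f_ge0 f_ge_t; rewrite mulrC mulr_natr -sumr_const.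
apply: (@le_trans _ _ (\sum_(x in A) f x)); first by apply: ler_sum => x /f_ge_t.
rewrite [X in _ <= X](bigID (fun x => x \in A)) /= lerDl.
by apply: sumr_ge0 => x _.
Qed.

Section Moments.
Variable R : realType.

Lemma sum_tupleS (n : nat) (F : seq bool -> R) :
  \sum_(x : (n.+1).-tuple bool) F x =
  \sum_(x : n.-tuple bool) (F (true :: x) + F (false :: x)).
Proof.
pose h := fun p : bool * n.-tuple bool => [tuple of p.1 :: p.2].
have h_bij : bijective h.
  exists (fun x : (n.+1).-tuple bool => (thead x, [tuple of behead x])).
    by move=> [b t]; congr pair; apply: val_inj.
  by move=> x /=; rewrite [in RHS](tuple_eta x).
rewrite (reindex h) /=; last by apply: onW_bij.
rewrite -(pair_big xpredT xpredT (fun b (t : n.-tuple bool) => F (b :: t))) /=.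
by rewrite big_bool /= -big_split /=; apply: eq_bigr => x _; rewrite addrC.
Qed.

Definition imbalance (s : seq bool) : R := 2 * (wt s)%:R - (size s)%:R.

Lemma imbalance_cons b s : imbalance (b :: s) = imbalance s + (if b then 1 else -1).
Proof.
by rewrite /imbalance /wt /= -!(addn1 (size s)) !natrD; case: b => /=; rewrite ?add0n ?natrD; ring.
Qed.

Lemma imbalance_rev s : imbalance (rev s) = imbalance s.
Proof. by rewrite /imbalance /wt count_rev size_rev. Qed.

Definition moment (k n : nat) : R := \sum_(x : n.-tuple bool) imbalance x ^+ k.

Lemma moment0 n : moment 0 n = (2 ^ n)%:R.
Proof.
by rewrite /moment; under eq_bigr do rewrite expr0; rewrite sumr_const card_tuple card_bool.
Qed.

Lemma moment_nil k : (0 < k)%N -> moment k 0 = 0.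
Proof.
case: k => // k _; rewrite /moment big1 // => x _.
by rewrite tuple0 /imbalance /= mulr0 subrr expr0n.
Qed.

(* Prepending a bit shifts the imbalance by +-1, so whenever (x+1)^k + (x-1)^k is an
   even polynomial of degree <= 6 the k-th moment at length n+1 is the corresponding
   combination of the moments of orders 6, 4, 2, 0 at length n. *)
Lemma moment_step k n (a b c d : R) :
  (forall x : R, (x + 1) ^+ k + (x - 1) ^+ k = a * x ^+ 6 + b * x ^+ 4 + c * x ^+ 2 + d) ->
  moment k n.+1 = a * moment 6 n + b * moment 4 n + c * moment 2 n + d * moment 0 n.
Proof.
move=> hpoly; rewrite /moment (sum_tupleS _ (fun s => imbalance s ^+ k)).
under eq_bigr do rewrite !imbalance_cons /= hpoly.
rewrite !big_split /= !mulr_sumr; congr (_ + _ + _ + _).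
by apply: eq_bigr => x _; rewrite expr0 mulr1.
Qed.

Lemma moment2 n : moment 2 n = n%:R * (2 ^ n)%:R.
Proof.
elim: n => [|n IH]; first by rewrite moment_nil // mul0r.
rewrite (@moment_step 2 n 0 0 2 2); last by move=> x; ring.
by rewrite IH !moment0 expnS natrM -natr1; ring.
Qed.

Lemma moment4 n : moment 4 n = (3 * n%:R ^+ 2 - 2 * n%:R) * (2 ^ n)%:R.
Proof.
elim: n => [|n IH]; first by rewrite moment_nil // mulr0n; ring.
rewrite (@moment_step 4 n 0 2 12 2); last by move=> x; ring.
by rewrite IH moment2 !moment0 expnS natrM -natr1; ring.
Qed.

Lemma moment6 n : moment 6 n = (15 * n%:R ^+ 3 - 30 * n%:R ^+ 2 + 16 * n%:R) * (2 ^ n)%:R.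
Proof.
elim: n => [|n IH]; first by rewrite moment_nil // mulr0n; ring.
rewrite (@moment_step 6 n 2 30 30 2); last by move=> x; ring.
by rewrite IH moment4 moment2 !moment0 expnS natrM -natr1; ring.
Qed.

Lemma moment6_le n : moment 6 n <= 15 * n%:R ^+ 3 * (2 ^ n)%:R.
Proof.
rewrite moment6 ler_pM2r ?ltr0n ?expn_gt0 //.
case: n => [|n]; first by rewrite mulr0n; lra.
have : 1 <= (n.+1)%:R :> R by rewrite ler1n.
move: ((n.+1)%:R : R) => N N1; nra.
Qed.

Lemma sum_behead n (F : seq bool -> R) :
  \sum_(x : (n.+1).-tuple bool) F (behead x) = 2 * \sum_(y : n.-tuple bool) F y.
Proof.
rewrite (sum_tupleS _ (fun s => F (behead s))) /= mulr_sumr.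
by apply: eq_bigr => y _; rewrite mulr2n mulrDl mul1r.
Qed.

Lemma sum_take n (F : seq bool -> R) : (forall s, F (rev s) = F s) ->
  \sum_(x : (n.+1).-tuple bool) F (take n x) = 2 * \sum_(y : n.-tuple bool) F y.
Proof.
move=> F_rev.
have rev_inv : involutive (@rev_tuple n.+1 bool) by move=> x; apply: val_inj; exact: revK.
rewrite (reindex_inj (inv_inj rev_inv)) /=.
rewrite (sum_tupleS _ (fun s => F (take n (rev s)))) /= mulr_sumr.
apply: eq_bigr => y _; rewrite !rev_cons -!cats1 !take_size_cat ?size_rev ?size_tuple // F_rev.
by rewrite mulr2n mulrDl mul1r.
Qed.

Lemma imbalance_outside (p1 p2 c : R) (s : seq bool) :
  0 <= c -> c <= 1/2 - p1 -> c <= p2 - 1/2 ->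
  ~~ wt_in (p1 * (size s)%:R) (p2 * (size s)%:R) s ->
  (2 * c * (size s)%:R) ^+ 6 <= imbalance s ^+ 6.
Proof.
move=> c0 c1 c2; rewrite /wt_in negb_and -!ltNge /imbalance.
have cN : 0 <= 2 * c * (size s)%:R by rewrite !mulr_ge0.
move: ((wt s)%:R : R) ((size s)%:R : R) cN (ler0n R (size s)) => w N cN N0.
case/orP => outside.
  have -> : (2 * w - N) ^+ 6 = (N - 2 * w) ^+ 6 by ring.
  by apply: lerXn2r; rewrite ?nnegrE //; nra.
by apply: lerXn2r; rewrite ?nnegrE //; nra.
Qed.

Lemma card_outside_le (p1 p2 c : R) n (A : {set n.-tuple bool}) :
  0 <= c -> c <= 1/2 - p1 -> c <= p2 - 1/2 ->
  (forall x, x \in A -> ~~ wt_in (p1 * n%:R) (p2 * n%:R) x) ->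
  #|A|%:R * (2 * c * n%:R) ^+ 6 <= 15 * n%:R ^+ 3 * (2 ^ n)%:R.
Proof.
move=> c0 c1 c2 A_out; apply: le_trans (moment6_le n).
apply: card_le_sum => [x | x /A_out x_out]; first exact: exprn_even_ge0.
by have := @imbalance_outside p1 p2 c x c0 c1 c2; rewrite size_tuple; apply.
Qed.

(* Each word of G has a bad window, obtained by dropping its last or its first bit;
   each of these two maps is 2-to-1, whence four times the tail bound. *)
Lemma card_Gset_le (p1 p2 c : R) (ell : nat) :
  0 <= c -> c <= 1/2 - p1 -> c <= p2 - 1/2 ->
  #|Gset ell p1 p2|%:R * (2 * c * ell%:R) ^+ 6 <= 60 * ell%:R ^+ 3 * (2 ^ ell)%:R.
Proof.
move=> c0 c1 c2.
pose f (x : (ell.+1).-tuple bool) := imbalance (take ell x) ^+ 6 + imbalance (behead x) ^+ 6.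
have f_ge0 x : 0 <= f x by rewrite addr_ge0 ?exprn_even_ge0.
have bad s : size s = ell -> ~~ wt_in (p1 * ell%:R) (p2 * ell%:R) s ->
    (2 * c * ell%:R) ^+ 6 <= imbalance s ^+ 6.
  by move=> <-; apply: imbalance_outside.
apply: (le_trans (@card_le_sum R _ (Gset ell p1 p2) f _ f_ge0 _)) => [x|].
  have size_behead : size (behead x) = ell by rewrite size_behead size_tuple.
  rewrite inE /window drop0 drop1 (take_oversize (s := behead x)) ?size_behead //.
  case/orP => [out | out].
    rewrite -[X in X <= _]addr0 lerD ?exprn_even_ge0 // bad //.
    by rewrite size_take size_tuple ltnSn.
  by rewrite -[X in X <= _]add0r lerD ?exprn_even_ge0 // bad.
rewrite big_split /= (sum_take ell (fun s => imbalance s ^+ 6)); last first.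
  by move=> s; rewrite imbalance_rev.
rewrite (sum_behead ell (fun s => imbalance s ^+ 6)) -/(moment 6 ell).
have := moment6_le ell; lra.
Qed.
End Moments.

(* The only length-n window of an n-bit word is the word itself. *)
Lemma Wset_full (R : realType) n (a b : R) (x : n.-tuple bool) :
  (x \in Wset n n a b) = wt_in a b x.
Proof.
have whole : window x 0 n = x by rewrite /window drop0 take_oversize ?size_tuple.
rewrite inE; apply/forallP/idP => [all_in | x_in i].
  by have := all_in ord0; rewrite add0n leqnn /= whole.
apply/implyP => i_n; have -> : nat_of_ord i = 0%N by lia.
by rewrite whole.
Qed.

Lemma count_from_sixth_moment (R : realFieldType) (A P K m u c n : R) :
  0 <= A -> 0 < n -> 0 <= u -> u <= c ^+ 2 * n -> 0 < K -> m * K <= 64 * u ^+ 3 ->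
  A * (2 * c * n) ^+ 6 <= K * n ^+ 3 * P -> m * A <= P.
Proof.
move=> A0 n0 u0 u_le K0 mK tail.
have u3 : u ^+ 3 <= (c ^+ 2 * n) ^+ 3 by apply: lerXn2r; rewrite ?nnegrE //; lra.
have n3 : 0 < n ^+ 3 by rewrite exprn_gt0.
have main : 64 * u ^+ 3 * A <= K * P.
  rewrite -(ler_pM2r n3) (mulrAC K); apply: le_trans tail.
  have -> : (2 * c * n) ^+ 6 = 64 * (c ^+ 2 * n) ^+ 3 * n ^+ 3 by ring.
  by have := mulr_ge0 A0 (ltW n3); nra.
by rewrite -(ler_pM2l K0); nra.
Qed.

Lemma sqr_le_bound (R : realDomainType) (a b d : R) :
  0 <= a -> a <= b -> b * b <= d -> a ^+ 2 <= d.
Proof. by move=> a0 ab bd; rewrite expr2; apply: le_trans bd; apply: ler_pM. Qed.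

(* From 1 - x <= e^(-x). *)
Lemma expR_le_inv (R : realType) (x : R) : x < 1 -> expR x <= (1 - x)^-1.
Proof.
move=> x1; have x10 : 0 < 1 - x by rewrite subr_gt0.
rewrite -[expR x]invrK lef_pV2 ?posrE ?invr_gt0 ?expR_gt0 // -expRN.
by have := expR_ge1Dx (- x); rewrite addrC.
Qed.

(* e^2 <= 8: from e^(1/16) <= 16/15 by squaring five times, rounding up. *)
Lemma expR2_le8 (R : realType) : expR (2 : R) <= 8.
Proof.
have -> : expR (2 : R) = expR (1/16) ^+ 2 ^+ 2 ^+ 2 ^+ 2 ^+ 2.
  by rewrite -!exprM -expRM_natl; congr expR; rewrite -[32%:R]/(32 : R); lra.
have e1 : expR (1/16 : R) <= 16/15.
  have -> : (16/15 : R) = (1 - 1/16)^-1 by field.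
  by apply: expR_le_inv; lra.
move: (expR (1/16 : R)) (expR_ge0 (1/16 : R)) e1 => e e0 e1.
have e2 : e ^+ 2 <= 11378/10000 by apply: sqr_le_bound e1 _ => //; lra.
move: (e ^+ 2) (exprn_ge0 2 e0) e2 => {e e0 e1} e e0 e2.
have e4 : e ^+ 2 <= 12946/10000 by apply: sqr_le_bound e2 _ => //; lra.
move: (e ^+ 2) (exprn_ge0 2 e0) e4 => {e e0 e2} e e0 e4.
have e8 : e ^+ 2 <= 1676/1000 by apply: sqr_le_bound e4 _ => //; lra.
move: (e ^+ 2) (exprn_ge0 2 e0) e8 => {e e0 e4} e e0 e8.
have e16 : e ^+ 2 <= 2809/1000 by apply: sqr_le_bound e8 _ => //; lra.
move: (e ^+ 2) (exprn_ge0 2 e0) e16 => {e e0 e8} e e0 e16.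
by apply: sqr_le_bound e16 _ => //; lra.
Qed.

(* e^2 <= 8 <= l + 1. *)
Lemma ln_ge2 (R : realType) (ell : nat) : (7 <= ell)%N -> 2 <= ln (ell.+1)%:R :> R.
Proof.
move=> ell7; rewrite -{1}(expRK 2) ler_ln ?posrE ?expR_gt0 ?ltr0n //.
by apply: le_trans (expR2_le8 R) _; rewrite ler_nat; lia.
Qed.

Lemma inj_into_larger {T U : finType} (u0 : U) {A : {set T}} {B : {set U}} :
  (#|A| <= #|B|)%N ->
  exists f : T -> U, {in A &, injective f} /\ (forall x, x \in A -> f x \in B).
Proof.
move=> AB.
pose f x := nth u0 (enum B) (index x (enum A)).
have index_lt x : x \in A -> (index x (enum A) < size (enum B))%N.
  move=> xA; apply: (leq_trans _ (_ : size (enum A) <= _)%N); last by rewrite -!cardE.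
  by rewrite index_mem mem_enum.
exists f; split => [x y xA yA fxy | x xA]; last by rewrite /f -mem_enum mem_nth ?index_lt.
have := congr1 (fun u => index u (enum B)) fxy; rewrite /= /f.
rewrite !index_uniq ?enum_uniq ?index_lt // => ixy.
by move/(congr1 (nth x (enum A))): ixy; rewrite !nth_index ?mem_enum.
Qed.

Theorem theorem6 (R : realType) (p1 p2 : R) (ell : nat) :
  0 <= p1 -> p1 < 1 / 2 -> 1 / 2 < p2 -> p2 <= 1 ->
  (7 <= ell)%N ->
  (let c := Num.min (1 / 2 - p1) (p2 - 1 / 2) in
   ell%:R >= (c ^+ 2)^-1 * ln (ell.+1)%:R) ->
  (#|Gset ell p1 p2| <= 2 ^ (ell - 3))%N /\
  exists Psi : (ell.+1).-tuple bool -> (ell - 2).-tuple bool,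
    {in Gset ell p1 p2 &, injective Psi} /\
    (forall x, x \in Gset ell p1 p2 ->
       Psi x \in Wset (ell - 2) (ell - 2) (p1 * (ell - 2)%:R) (p2 * (ell - 2)%:R)).
Proof.
move=> p1_ge0 p1_lt p2_gt p2_le ell7; set c := Num.min _ _ => /= ell_ge.
have c0 : 0 < c by rewrite lt_min; apply/andP; split; lra.
have c1 : c <= 1/2 - p1 by rewrite ge_min lexx.
have c2 : c <= p2 - 1/2 by rewrite ge_min lexx orbT.
have c2ell : 2 <= c ^+ 2 * ell%:R.
  have cc0 : 0 < (c ^+ 2)^-1 by rewrite invr_gt0 exprn_gt0.
  apply: le_trans (@ln_ge2 R _ ell7) _.
  by rewrite -(ler_pM2l cc0) mulrA mulVf ?mul1r // gt_eqF // -invr_gt0.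
set n := (ell - 2)%N; set G := Gset ell p1 p2.
set W := Wset n n (p1 * n%:R) (p2 * n%:R).
have G_small : (8 * #|G| <= 2 ^ ell)%N.
  rewrite -(ler_nat R) natrM.
  apply: (@count_from_sixth_moment R _ _ 60 8 2 c ell%:R) => //.
  - by rewrite ltr0n (leq_trans _ ell7).
  - by rewrite !exprS expr0; lra.
  - exact: card_Gset_le (ltW c0) c1 c2.
have W_large : (2 * #|~: W| <= 2 ^ n)%N.
  rewrite -(ler_nat R) natrM.
  have n_eq : n%:R = ell%:R - 2 :> R by rewrite natrB // (leq_trans _ ell7).
  apply: (@count_from_sixth_moment R _ _ 15 2 (3/2) c n%:R) => //.
  - by rewrite ltr0n subn_gt0 (leq_trans _ ell7).
  - by rewrite n_eq; nra.
  - by rewrite !exprS expr0; lra.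
  - by apply: card_outside_le (ltW c0) c1 c2 _ => x; rewrite inE Wset_full.
have ell3 : (3 <= ell)%N by apply: leq_trans ell7.
have exp8 : (2 ^ ell = 8 * 2 ^ (ell - 3))%N by rewrite -{1}(subnK ell3) expnD mulnC.
have exp2 : (2 ^ n = 2 * 2 ^ (ell - 3))%N.
  by rewrite -expnS /n -subSn // subSS.
have card_W := cardsC W; rewrite card_tuple card_bool exp2 in card_W.
rewrite exp8 leq_pmul2l // in G_small; rewrite exp2 leq_pmul2l // in W_large.
have G_le_W : (#|G| <= #|W|)%N.
  by move: (2 ^ (ell - 3))%N card_W W_large G_small => P; lia.
split; first exact: G_small.
have [Psi [Psi_inj Psi_W]] := inj_into_larger (nseq_tuple n false) G_le_W.
by exists Psi.
Qed.
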